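(* Let $\mathcal B$ be a bicategory (a skew bicategory whose constraints $\alpha,\lambda,\rho$ are all invertible). Suppose given data $(D,T,K,v,k,v_0)$ on $\mathcal B$ as in the definition of a skew warping below, with all components of $v$, $k$ and $v_0$ invertible, satisfying axioms (W1) and (W2). Then axioms (W3), (W4) and (W5) also hold; that is, the data is a warping on $\mathcal B$.
   Context: Notation: for 1-cells $f\colon X\to Y$, $g\colon Y\to Z$ write $g\cdot f\colon X\to Z$ for their composite, $1$ or $1_X$ for identity 1-cells, and $\theta\cdot f$, $g\cdot\theta$ for whiskerings of 2-cells. A skew bicategory $\mathcal B$ consists of objects; hom-categories $\mathcal B(X,Y)$; composition functors $\mathcal B(Y,Z)\times\mathcal B(X,Y)\to\mathcal B(X,Z)$; identity 1-cells $1_X$; and natural (not necessarily invertible) 2-cells $\alpha_{f,g,h}\colon (h\cdot g)\cdot f\to h\cdot(g\cdot f)$, $\lambda_f\colon 1\cdot f\to f$, $\rho_f\colon f\to f\cdot 1$, subject to: (B1) $(k\cdot\alpha_{f,g,h})\circ\alpha_{f,h\cdot g,k}\circ(\alpha_{g,h,k}\cdot f)=\alpha_{g\cdot f,h,k}\circ\alpha_{f,g,k\cdot h}$; (B2) $(g\cdot\lambda_f)\circ\alpha_{f,1,g}\circ(\rho_g\cdot f)=1_{g\cdot f}$; (B3) $\lambda_{g\cdot f}\circ\alpha_{f,g,1}=\lambda_g\cdot f$; (B4) $\alpha_{1,f,g}\circ\rho_{g\cdot f}=g\cdot\rho_f$; (B5) $\lambda_1\circ\rho_1=1_{1}$. A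 skew warping on a skew bicategory $\mathcal B$ consists of: a function $D$ on objects; functors $T\colon\mathcal B(X,DY)\to\mathcal B(DX,DY)$; 1-cells $K=K_X\colon X\to DX$; natural 2-cells $v=v_{g,f}\colon T(Tg\cdot f)\to Tg\cdot Tf$ (for $f\colon X\to DY$, $g\colon Y\to DZ$), $k=k_f\colon f\to Tf\cdot K_X$ (for $f\colon X\to DY$), and 2-cells $v_0=v_{0,Y}\colon TK_Y\to 1_{DY}$, subject to the following axioms, for all $f\colon X\to DY$, $g\colon Y\to DZ$, $h\colon Z\to DW$: (W1) $\alpha\circ(v_{h,g}\cdot Tf)\circ v_{Th\cdot g,f}=(Th\cdot v_{g,f})\circ v_{h,Tg\cdot f}\circ T(\alpha)\circ T(v_{h,g}\cdot f)$ as 2-cells $T(T(Th\cdot g)\cdot f)\to Th\cdot(Tg\cdot Tf)$; (W2) $(Tf\cdot v_{0,X})\circ v_{f,K_X}\circ T(k_f)=\rho_{Tf}\colon Tf\to Tf\cdot 1$; (W3) $\lambda_{Tf}\circ(v_{0,Y}\cdot Tf)\circ v_{K_Y,f}=T(\lambda_f)\circ T(v_{0,Y}\cdot f)\colon T(TK_Y\cdot f)\to Tf$; (W4) $\alpha\circ(v_{g,f}\cdot K_X)\circ k_{Tg\cdot f}=Tg\cdot k_f\colon Tg\cdot f\to Tg\cdot(Tf\cdot K_X)$; (W5) $\lambda_{K_X}\circ(v_{0,X}\cdot K_X)\circ k_{K_X}=1_{K_X}$. A warping on a bicategory is a skew warping for which $v$, $k$, $v_0$ are invertible. *)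

Set Implicit Arguments.
Unset Strict Implicit.

Unset Implicit Arguments.
Record SkewBicatData := {
  ob : Type;
  hom : ob -> ob -> Type;
  cell : forall X Y : ob, hom X Y -> hom X Y -> Type;
  id2 : forall X Y (f : hom X Y), cell X Y f f;
  vcomp : forall X Y (f g h : hom X Y), cell X Y g h -> cell X Y f g -> cell X Y f h;
  comp1 : forall X Y Z, hom Y Z -> hom X Y -> hom X Z;
  hcomp : forall X Y Z (g g' : hom Y Z) (f f' : hom X Y),
      cell Y Z g g' -> cell X Y f f' -> cell X Z (comp1 X Y Z g f) (comp1 X Y Z g' f');
  id1 : forall X, hom X X;
  alpha : forall W X Y Z (f : hom W X) (g : hom X Y) (h : hom Y Z),
      cell W Z (comp1 W X Z (comp1 X Y Z h g) f) (comp1 W Y Z h (comp1 W X Y g f));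
  lambda : forall X Y (f : hom X Y), cell X Y (comp1 X Y Y (id1 Y) f) f;
  rho : forall X Y (f : hom X Y), cell X Y f (comp1 X X Y f (id1 X))
}.

Set Implicit Arguments.
Arguments cell {s X Y} _ _.
Arguments id2 {s X Y} _.
Arguments vcomp {s X Y f g h} _ _.
Arguments comp1 {s X Y Z} _ _.
Arguments hcomp {s X Y Z g g' f f'} _ _.
Arguments id1 {s} _.
Arguments alpha {s W X Y Z} _ _ _.
Arguments lambda {s X Y} _.
Arguments rho {s X Y} _.

Declare Scope bicat_scope.
Delimit Scope bicat_scope with bc.
Open Scope bicat_scope.
Notation "g · f" := (comp1 g f) (at level 40, left associativity) : bicat_scope.
Notation "b ∘ a" := (vcomp b a) (at level 40, left associativity) : bicat_scope.
Notation "θ ⋆ φ" := (hcomp θ φ) (at level 35) : bicat_scope.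
Definition rwhisk {B : SkewBicatData} {X Y Z} {g g' : hom B Y Z}
  (θ : cell g g') (f : hom B X Y) : cell (g · f) (g' · f) := hcomp θ (id2 f).
Definition lwhisk {B : SkewBicatData} {X Y Z} (g : hom B Y Z) {f f' : hom B X Y}
  (θ : cell f f') : cell (g · f) (g · f') := hcomp (id2 g) θ.
Notation "θ ▹ f" := (rwhisk θ f) (at level 35) : bicat_scope.
Notation "g ◃ θ" := (lwhisk g θ) (at level 35) : bicat_scope.

Definition invertible {B : SkewBicatData} {X Y} {f g : hom B X Y} (c : cell f g) : Prop :=
  exists c' : cell g f, c' ∘ c = id2 f /\ c ∘ c' = id2 g.

Definition hom_categories (B : SkewBicatData) : Prop :=
  (forall X Y (f g : hom B X Y) (a : cell f g), id2 g ∘ a = a) /\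
  (forall X Y (f g : hom B X Y) (a : cell f g), a ∘ id2 f = a) /\
  (forall X Y (f g h i : hom B X Y) (a : cell f g) (b : cell g h) (c : cell h i),
      c ∘ (b ∘ a) = (c ∘ b) ∘ a).

Definition comp_functorial (B : SkewBicatData) : Prop :=
  (forall X Y Z (g : hom B Y Z) (f : hom B X Y), id2 g ⋆ id2 f = id2 (g · f)) /\
  (forall X Y Z (g g' g'' : hom B Y Z) (f f' f'' : hom B X Y)
     (t : cell g g') (t' : cell g' g'') (p : cell f f') (p' : cell f' f''),
      (t' ∘ t) ⋆ (p' ∘ p) = (t' ⋆ p') ∘ (t ⋆ p)).

Definition constraints_natural (B : SkewBicatData) : Prop :=
  (forall W X Y Z (f f' : hom B W X) (g g' : hom B X Y) (h h' : hom B Y Z)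
     (a : cell f f') (b : cell g g') (c : cell h h'),
      alpha f' g' h' ∘ ((c ⋆ b) ⋆ a) = (c ⋆ (b ⋆ a)) ∘ alpha f g h) /\
  (forall X Y (f f' : hom B X Y) (a : cell f f'),
      lambda f' ∘ (id2 (id1 Y) ⋆ a) = a ∘ lambda f) /\
  (forall X Y (f f' : hom B X Y) (a : cell f f'),
      rho f' ∘ a = (a ⋆ id2 (id1 X)) ∘ rho f).

Definition axB1 (B : SkewBicatData) : Prop :=
  forall V W X Y Z (f : hom B V W) (g : hom B W X) (h : hom B X Y) (k : hom B Y Z),
    (k ◃ alpha f g h) ∘ alpha f (h · g) k ∘ (alpha g h k ▹ f)
    = alpha (g · f) h k ∘ alpha f g (k · h).
Definition axB2 (B : SkewBicatData) : Prop :=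
  forall X Y Z (f : hom B X Y) (g : hom B Y Z),
    (g ◃ lambda f) ∘ alpha f (id1 Y) g ∘ (rho g ▹ f) = id2 (g · f).
Definition axB3 (B : SkewBicatData) : Prop :=
  forall X Y Z (f : hom B X Y) (g : hom B Y Z),
    lambda (g · f) ∘ alpha f g (id1 Z) = lambda g ▹ f.
Definition axB4 (B : SkewBicatData) : Prop :=
  forall X Y Z (f : hom B X Y) (g : hom B Y Z),
    alpha (id1 X) f g ∘ rho (g · f) = g ◃ rho f.
Definition axB5 (B : SkewBicatData) : Prop :=
  forall X : ob B, lambda (id1 X) ∘ rho (id1 X) = id2 (id1 X).

Definition is_skew_bicat (B : SkewBicatData) : Prop :=
  hom_categories B /\ comp_functorial B /\ constraints_natural B /\
  axB1 B /\ axB2 B /\ axB3 B /\ axB4 B /\ axB5 B.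

Definition is_bicat (B : SkewBicatData) : Prop :=
  is_skew_bicat B /\
  (forall W X Y Z (f : hom B W X) (g : hom B X Y) (h : hom B Y Z), invertible (alpha f g h)) /\
  (forall X Y (f : hom B X Y), invertible (lambda f)) /\
  (forall X Y (f : hom B X Y), invertible (rho f)).

Unset Implicit Arguments.
Record WarpData (B : SkewBicatData) := {
  D : ob B -> ob B;
  T : forall X Y, hom B X (D Y) -> hom B (D X) (D Y);
  T2 : forall X Y (f f' : hom B X (D Y)), cell f f' -> cell (T X Y f) (T X Y f');
  K : forall X, hom B X (D X);
  v : forall X Y Z (g : hom B Y (D Z)) (f : hom B X (D Y)),
      cell (T X Z (T Y Z g · f)) (T Y Z g · T X Y f);
  k : forall X Y (f : hom B X (D Y)), cell f (T X Y f · K X);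
  v0 : forall Y, cell (T Y Y (K Y)) (id1 (D Y))
}.

Set Implicit Arguments.
Arguments D {B} _ _.
Arguments T {B} _ {X Y} _.
Arguments T2 {B} _ {X Y f f'} _.
Arguments K {B} _ _.
Arguments v {B} _ {X Y Z} _ _.
Arguments k {B} _ {X Y} _.
Arguments v0 {B} _ _.

Section WarpAxioms.
Context {B : SkewBicatData} (W : WarpData B).
Local Notation T := (T W).
Local Notation T2 := (T2 W).
Local Notation K := (K W).
Local Notation v := (v W).
Local Notation k := (k W).
Local Notation v0 := (v0 W).
Local Notation D := (D W).

Definition T_functor : Prop :=
  (forall X Y (f : hom B X (D Y)), T2 (id2 f) = id2 (T f)) /\
  (forall X Y (f f' f'' : hom B X (D Y)) (a : cell f f') (b : cell f' f''),
      T2 (b ∘ a) = T2 b ∘ T2 a).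

Definition v_natural : Prop :=
  forall X Y Z (g g' : hom B Y (D Z)) (f f' : hom B X (D Y)) (b : cell g g') (a : cell f f'),
    v g' f' ∘ T2 (T2 b ⋆ a) = (T2 b ⋆ T2 a) ∘ v g f.
Definition k_natural : Prop :=
  forall X Y (f f' : hom B X (D Y)) (a : cell f f'),
    k f' ∘ a = (T2 a ⋆ id2 (K X)) ∘ k f.

Definition axW1 : Prop :=
  forall X Y Z V (f : hom B X (D Y)) (g : hom B Y (D Z)) (h : hom B Z (D V)),
    alpha (T f) (T g) (T h) ∘ (v h g ▹ T f) ∘ v (T h · g) f
    = (T h ◃ v g f) ∘ v h (T g · f) ∘ T2 (alpha f (T g) (T h)) ∘ T2 (v h g ▹ f).
Definition axW2 : Prop :=
  forall X Y (f : hom B X (D Y)),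
    (T f ◃ v0 X) ∘ v f (K X) ∘ T2 (k f) = rho (T f).
Definition axW3 : Prop :=
  forall X Y (f : hom B X (D Y)),
    lambda (T f) ∘ (v0 Y ▹ T f) ∘ v (K Y) f = T2 (lambda f) ∘ T2 (v0 Y ▹ f).
Definition axW4 : Prop :=
  forall X Y Z (f : hom B X (D Y)) (g : hom B Y (D Z)),
    alpha (K X) (T f) (T g) ∘ (v g f ▹ K X) ∘ k (T g · f) = T g ◃ k f.
Definition axW5 : Prop :=
  forall X, lambda (K X) ∘ (v0 X ▹ K X) ∘ k (K X) = id2 (K X).

Definition components_invertible : Prop :=
  (forall X Y Z (g : hom B Y (D Z)) (f : hom B X (D Y)), invertible (v g f)) /\
  (forall X Y (f : hom B X (D Y)), invertible (k f)) /\
  (forall Y, invertible (v0 Y)).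
End WarpAxioms.

From Corelib Require Import ssreflect.

(* Since k is a natural isomorphism, T is faithful on 2-cells, and invertible
   2-cells may be cancelled on either side.  Axiom (W2) exhibits rho_(Th) as
   (Th ◃ v0) ∘ s_h with s_h := v_(h,K) ∘ T k_h, and the triangle axiom turns any
   such factorisation into a retraction of alpha ∘ (s_h ▹ f).  Using it, (W1)
   and the naturality of v, both sides of (W3) whiskered by Th become v_(h,f)
   after precomposition with one invertible cell; taking h = K and cancelling
   TK ◃ - through v0 gives (W3).  For (W4) apply T and compose with an
   invertible cell built from v and v0: both sides reduce to
   (Tg ◃ rho_(Tf)) ∘ v_(g,f) by (W1), (W2) and (B4).  For (W5) apply T, rewrite
   with (W3) at f = K and conclude with (W2) and (B5). *)


Section SkewBicategory.
Variable B : SkewBicatData.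
Hypothesis Hcat : hom_categories B.
Hypothesis Hfun : comp_functorial B.
Hypothesis Hnat : constraints_natural B.
Hypothesis Htriangle : axB2 B.
Hypothesis Halpha_rho : axB4 B.
Hypothesis Hlambda_rho : axB5 B.
Hypothesis Halpha_inv : forall W X Y Z (f : hom B W X) (g : hom B X Y) (h : hom B Y Z),
  invertible (alpha f g h).
Hypothesis Hlambda_inv : forall X Y (f : hom B X Y), invertible (lambda f).

Lemma vcomp_idl {X Y} {f g : hom B X Y} (a : cell f g) : id2 g ∘ a = a.
Proof. apply Hcat. Qed.

Lemma vcomp_idr {X Y} {f g : hom B X Y} (a : cell f g) : a ∘ id2 f = a.
Proof. apply Hcat. Qed.

Lemma vcompA {X Y} {f g h i : hom B X Y} (a : cell f g) (b : cell g h) (c : cell h i) :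
  c ∘ (b ∘ a) = c ∘ b ∘ a.
Proof. apply Hcat. Qed.

Lemma hcomp_id2 {X Y Z} (g : hom B Y Z) (f : hom B X Y) : id2 g ⋆ id2 f = id2 (g · f).
Proof. apply Hfun. Qed.

Lemma hcomp_vcomp {X Y Z} {g g' g'' : hom B Y Z} {f f' f'' : hom B X Y}
    (t : cell g g') (t' : cell g' g'') (p : cell f f') (p' : cell f' f'') :
  (t' ∘ t) ⋆ (p' ∘ p) = (t' ⋆ p') ∘ (t ⋆ p).
Proof. apply Hfun. Qed.

Lemma rwhisk_vcomp {X Y Z} {g g' g'' : hom B Y Z} (f : hom B X Y)
    (t : cell g g') (t' : cell g' g'') :
  (t' ∘ t) ▹ f = (t' ▹ f) ∘ (t ▹ f).
Proof. by rewrite /rwhisk -hcomp_vcomp vcomp_idl. Qed.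

Lemma lwhisk_vcomp {X Y Z} (g : hom B Y Z) {f f' f'' : hom B X Y}
    (t : cell f f') (t' : cell f' f'') :
  g ◃ (t' ∘ t) = (g ◃ t') ∘ (g ◃ t).
Proof. by rewrite /lwhisk -hcomp_vcomp vcomp_idl. Qed.

Lemma rwhisk_lwhisk {X Y Z} {g g' : hom B Y Z} {f f' : hom B X Y}
    (t : cell g g') (p : cell f f') :
  (t ▹ f') ∘ (g ◃ p) = t ⋆ p.
Proof. by rewrite /rwhisk /lwhisk -hcomp_vcomp vcomp_idl vcomp_idr. Qed.

Lemma lwhisk_rwhisk {X Y Z} {g g' : hom B Y Z} {f f' : hom B X Y}
    (t : cell g g') (p : cell f f') :
  (g' ◃ p) ∘ (t ▹ f) = t ⋆ p.
Proof. by rewrite /rwhisk /lwhisk -hcomp_vcomp vcomp_idl vcomp_idr. Qed.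

Lemma invertible_vcomp {X Y} {f g h : hom B X Y} (a : cell f g) (b : cell g h) :
  invertible a -> invertible b -> invertible (b ∘ a).
Proof.
  move=> [a' [a'a aa']] [b' [b'b bb']]; exists (a' ∘ b'); split.
  - by rewrite !vcompA -(vcompA b) b'b vcomp_idr a'a.
  - by rewrite !vcompA -(vcompA a') aa' vcomp_idr bb'.
Qed.

Lemma invertible_hcomp {X Y Z} {g g' : hom B Y Z} {f f' : hom B X Y}
    (t : cell g g') (p : cell f f') :
  invertible t -> invertible p -> invertible (t ⋆ p).
Proof.
  move=> [t' [t't tt']] [p' [p'p pp']]; exists (t' ⋆ p').
  by rewrite -!hcomp_vcomp t't tt' p'p pp' !hcomp_id2.
Qed.

Lemma invertible_id2 {X Y} (f : hom B X Y) : invertible (id2 f).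
Proof. by exists (id2 f); rewrite vcomp_idl. Qed.

Lemma invertible_rwhisk {X Y Z} {g g' : hom B Y Z} (t : cell g g') (f : hom B X Y) :
  invertible t -> invertible (t ▹ f).
Proof. by move=> Ht; apply: invertible_hcomp Ht (invertible_id2 f). Qed.

Lemma invertible_lwhisk {X Y Z} (g : hom B Y Z) {f f' : hom B X Y} (p : cell f f') :
  invertible p -> invertible (g ◃ p).
Proof. exact: invertible_hcomp (invertible_id2 g). Qed.

Lemma invertible_cancel_l {X Y} {f g h : hom B X Y} (c : cell g h) (a b : cell f g) :
  invertible c -> c ∘ a = c ∘ b -> a = b.
Proof.
  move=> [c' [c'c _]] E.
  by rewrite -(vcomp_idl a) -(vcomp_idl b) -c'c -!vcompA E.
Qed.

Lemma invertible_cancel_r {X Y} {f g h : hom B X Y} (c : cell f g) (a b : cell g h) :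
  invertible c -> a ∘ c = b ∘ c -> a = b.
Proof.
  move=> [c' [_ cc']] E.
  by rewrite -(vcomp_idr a) -(vcomp_idr b) -cc' !vcompA E.
Qed.

Lemma alpha_lwhisk_rwhisk {W X Y Z} (f : hom B W X) {m m' : hom B X Y} (g : hom B Y Z)
    (u : cell m m') :
  alpha f m' g ∘ ((g ◃ u) ▹ f) = (g ◃ (u ▹ f)) ∘ alpha f m g.
Proof. exact: (proj1 Hnat _ _ _ _ _ _ _ _ _ _ (id2 f) u (id2 g)). Qed.

Lemma alpha_lwhisk {W X Y Z} {f f' : hom B W X} (g : hom B X Y) (h : hom B Y Z)
    (a : cell f f') :
  alpha f' g h ∘ ((h · g) ◃ a) = (h ◃ (g ◃ a)) ∘ alpha f g h.
Proof. by rewrite /lwhisk -hcomp_id2; apply Hnat. Qed.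

Lemma lambda_natural {X Y} {f f' : hom B X Y} (a : cell f f') :
  lambda f' ∘ (id1 Y ◃ a) = a ∘ lambda f.
Proof. apply Hnat. Qed.

Lemma rho_natural {X Y} {f f' : hom B X Y} (a : cell f f') :
  rho f' ∘ a = (a ▹ id1 X) ∘ rho f.
Proof. apply Hnat. Qed.

Lemma lwhisk_lambda_retraction {X Y Z} (f : hom B X Y) (g : hom B Y Z) {m : hom B Y Y}
    (u : cell m (id1 Y)) (s : cell g (g · m)) :
  (g ◃ u) ∘ s = rho g ->
  (g ◃ (lambda f ∘ (u ▹ f))) ∘ alpha f m g ∘ (s ▹ f) = id2 (g · f).
Proof.
  move=> us.
  rewrite lwhisk_vcomp -(vcompA (alpha f m g)) -alpha_lwhisk_rwhisk.
  by rewrite -!vcompA -rwhisk_vcomp us !vcompA Htriangle.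
Qed.

Lemma lwhisk_inj {X Y} {g : hom B Y Y} (u : cell g (id1 Y)) {f f' : hom B X Y}
    (a b : cell f f') :
  invertible u -> g ◃ a = g ◃ b -> a = b.
Proof.
  move=> Hu E.
  apply: (invertible_cancel_r (lambda f)); first exact: Hlambda_inv.
  rewrite -!lambda_natural; congr (_ ∘ _).
  apply: (invertible_cancel_r (u ▹ f)); first exact: invertible_rwhisk.
  by rewrite !lwhisk_rwhisk -!rwhisk_lwhisk E.
Qed.


Section Warping.
Variable W : WarpData B.
Hypothesis HT : T_functor W.
Hypothesis Hv : v_natural W.
Hypothesis Hk : k_natural W.
Hypothesis Hv_inv : forall X Y Z (g : hom B Y (D W Z)) (f : hom B X (D W Y)),
  invertible (v W g f).
Hypothesis Hk_inv : forall X Y (f : hom B X (D W Y)), invertible (k W f).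
Hypothesis Hv0_inv : forall Y, invertible (v0 W Y).
Hypothesis HW1 : axW1 W.
Hypothesis HW2 : axW2 W.

Local Notation D := (D W).
Local Notation T := (T W).
Local Notation T2 := (T2 W).
Local Notation K := (K W).
Local Notation v := (v W).
Local Notation k := (k W).
Local Notation v0 := (v0 W).

Lemma T2_id2 {X Y} (f : hom B X (D Y)) : T2 (id2 f) = id2 (T f).
Proof. apply HT. Qed.

Lemma T2_vcomp {X Y} {f f' f'' : hom B X (D Y)} (a : cell f f') (b : cell f' f'') :
  T2 (b ∘ a) = T2 b ∘ T2 a.
Proof. apply HT. Qed.

Lemma invertible_T2 {X Y} {f f' : hom B X (D Y)} (a : cell f f') :
  invertible a -> invertible (T2 a).
Proof.
  move=> [a' [a'a aa']]; exists (T2 a').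
  by rewrite -!T2_vcomp a'a aa' !T2_id2.
Qed.

Lemma T2_inj {X Y} {f f' : hom B X (D Y)} (a b : cell f f') : T2 a = T2 b -> a = b.
Proof.
  move=> E; apply: (invertible_cancel_l (k f')); first exact: Hk_inv.
  by rewrite !Hk E.
Qed.

Lemma v_natural_l {X Y Z} {g g' : hom B Y (D Z)} (f : hom B X (D Y)) (b : cell g g') :
  v g' f ∘ T2 (T2 b ▹ f) = (T2 b ▹ T f) ∘ v g f.
Proof. by rewrite /rwhisk -T2_id2; apply: Hv. Qed.

Lemma v_natural_r {X Y Z} (g : hom B Y (D Z)) {f f' : hom B X (D Y)} (a : cell f f') :
  v g f' ∘ T2 (T g ◃ a) = (T g ◃ T2 a) ∘ v g f.
Proof. by rewrite /lwhisk -T2_id2; apply: Hv. Qed.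

Lemma hcomp_v0_k {X Y} (f : hom B X (D Y)) {y : hom B (D X) (D Y)} (c : cell (T f) y) :
  (c ⋆ v0 X) ∘ v f (K X) ∘ T2 (k f) = rho y ∘ c.
Proof.
  by rewrite -rwhisk_lwhisk -!vcompA (vcompA (T2 (k f))) HW2 rho_natural.
Qed.

Lemma lwhisk_axW3 {X Y V} (f : hom B X (D Y)) (h : hom B Y (D V)) :
  T h ◃ (lambda (T f) ∘ (v0 Y ▹ T f) ∘ v (K Y) f)
  = T h ◃ (T2 (lambda f) ∘ T2 (v0 Y ▹ f)).
Proof.
  set s := v h (K Y) ∘ T2 (k h).
  have s_rho : (T h ◃ v0 Y) ∘ s = rho (T h) by rewrite /s vcompA HW2.
  set Q := v h (T (K Y) · f) ∘ T2 (alpha f (T (K Y)) (T h) ∘ (s ▹ f)).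
  have HQ : invertible Q.
  { apply: invertible_vcomp; last exact: Hv_inv.
    apply/invertible_T2/invertible_vcomp; last exact: Halpha_inv.
    apply/invertible_rwhisk/invertible_vcomp; last exact: Hv_inv.
    exact/invertible_T2/Hk_inv. }
  apply: (invertible_cancel_r Q) => //; transitivity (v h f).
  - set z := T h ◃ (lambda (T f) ∘ (v0 Y ▹ T f)).
    rewrite /Q /s rwhisk_vcomp !T2_vcomp lwhisk_vcomp !vcompA.
    rewrite -!(vcompA _ _ z) -(HW1 _ _ _ _ f (K Y) h) -!vcompA v_natural_l !vcompA.
    rewrite -(vcompA (T2 (k h) ▹ T f)) -rwhisk_vcomp.
    by rewrite lwhisk_lambda_retraction // vcomp_idl.
  - rewrite /Q -T2_vcomp vcompA -v_natural_r -vcompA -T2_vcomp.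
    by rewrite vcompA lwhisk_lambda_retraction // T2_id2 vcomp_idr.
Qed.

Lemma warping_axW3 : axW3 W.
Proof. by move=> X Y f; apply: (lwhisk_inj (v0 Y)) (lwhisk_axW3 f (K Y)). Qed.

Lemma warping_axW4 : axW4 W.
Proof.
  move=> X Y Z f g; apply: T2_inj.
  set M := (T g ◃ ((T f ◃ v0 X) ∘ v f (K X))) ∘ v g (T f · K X).
  have HM : invertible M.
  { apply: invertible_vcomp; first exact: Hv_inv.
    apply/invertible_lwhisk/invertible_vcomp; first exact: Hv_inv.
    exact/invertible_lwhisk/Hv0_inv. }
  apply: (invertible_cancel_l M) => //; transitivity ((T g ◃ rho (T f)) ∘ v g f).
  - set z := T g ◃ (T f ◃ v0 X).
    rewrite !T2_vcomp /M lwhisk_vcomp !vcompA.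
    rewrite -!(vcompA _ _ z) -(HW1 _ _ _ _ (K X) f g) !vcompA -alpha_lwhisk.
    rewrite -(vcompA (v g f ▹ T (K X))) lwhisk_rwhisk -!(vcompA _ _ (alpha _ _ _)).
    by rewrite hcomp_v0_k vcompA Halpha_rho.
  - by rewrite /M -vcompA v_natural_r vcompA -lwhisk_vcomp HW2.
Qed.

Lemma warping_axW5 : axW5 W.
Proof.
  move=> X; apply: T2_inj; rewrite !T2_vcomp T2_id2 -(warping_axW3 _ _ (K X)).
  apply: (invertible_cancel_l (v0 X)) => //.
  rewrite vcomp_idr !vcompA -lambda_natural -(vcompA (v0 X ▹ T (K X))) lwhisk_rwhisk.
  by rewrite -!(vcompA _ _ (lambda _)) hcomp_v0_k vcompA Hlambda_rho vcomp_idl.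
Qed.

End Warping.
End SkewBicategory.

Theorem mainTheorem1 (B : SkewBicatData) (HB : is_bicat B) (W : WarpData B)
  (HT : T_functor W) (Hv : v_natural W) (Hk : k_natural W)
  (Hinv : components_invertible W) (H1 : axW1 W) (H2 : axW2 W) :
  axW3 W /\ axW4 W /\ axW5 W.
Proof.
  case: HB => [[Hcat [Hfun [Hnat [_ [HB2 [_ [HB4 HB5]]]]]]] [Halpha [Hlambda _]]].
  case: Hinv => [Hv_inv [Hk_inv Hv0_inv]].
  split; [|split].
  - exact: warping_axW3.
  - exact: warping_axW4.
  - exact: warping_axW5.
Qed.
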